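(* Under Assumptions (A) and (C), there exists $c_0>0$ such that for every $t\in[0,T]$, $$\langle f,2\Lambda f+(\boldsymbol B_t+(\bar{\boldsymbol B}_t)^* )f\rangle_{L^2,N}\ge c_0\langle f,f\rangle_{L^2,N}\qquad\text{for all }f\in L^2([0,T],\mathbb R^N).$$
   Context: $\langle f,g\rangle_{L^2,N}=\int_0^Tf^\top g\,dt$; kernels $G\in L^2([0,T]^2,\mathbb R^{N\times N})$ induce $(\boldsymbol Gf)(t)=\int_0^TG(t,s)f(s)ds$, $\boldsymbol G^*$ induced by $G(s,t)^\top$; Volterra kernel: $G(t,s)=0$ for $s\ge t$; $\mathcal G$: real Volterra kernels in $L^2([0,T]^2)$. Assumption (A) (relevant part): $\lambda^i>0$ for $i=1,\dots,N$; $B^{ij},\bar B^{ij}\in\mathcal G$ for all $i,j$, with $\bar B^{ii}=B^{ii}$; $B=(B^{ij})_{i,j}$, $\bar B=(\bar B^{ij})_{i,j}$, $\Lambda=\mathrm{diag}(\lambda^1,\dots,\lambda^N)$. Assumption (C): $\exists c_0>0$ with $\langle f,(\boldsymbol B+\bar{\boldsymbol B}^* )f+2\Lambda f-c_0f\rangle_{L^2,N}\ge0$ for all $f$. Truncation: $G_t(s,r)=\mathbb 1_{\{r>t\}}G(s,r)$ with induced operator $\boldsymbol G_t$; $(\bar{\boldsymbol B}_t)^*$ is the adjoint of $\bar{\boldsymbol B}_t$. *)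

From HB Require Import structures.
From mathcomp Require Import all_boot all_order all_algebra.
From mathcomp Require Import all_classical all_reals all_analysis.
Set Implicit Arguments. Unset Strict Implicit. Unset Printing Implicit Defensive.
Import Order.TTheory GRing.Theory Num.Theory.
Local Open Scope classical_set_scope.
Local Open Scope ring_scope.

Section Defs.
Variable R : realType.
Notation mu := (@lebesgue_measure R).

Definition L2fun (T : R) (g : R -> R) : Prop :=
  measurable_fun `[0, T] g /\
  mu.-integrable `[0, T] (fun x => ((g x) ^+ 2)%:E).

Definition L2vec (N : nat) (T : R) (f : 'I_N -> R -> R) : Prop :=
  forall i, L2fun T (f i).

Definition L2kernel (T : R) (G : R -> R -> R) : Prop :=
  measurable_fun (`[0, T] `*` `[0, T]) (fun p : R * R => G p.1 p.2) /\
  (mu \x mu)%E.-integrable (`[0, T] `*` `[0, T])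
     (fun p : R * R => ((G p.1 p.2) ^+ 2)%:E).

Definition volterra (T : R) (G : R -> R -> R) : Prop :=
  forall t s, 0 <= t <= T -> 0 <= s <= T -> t <= s -> G t s = 0.

Definition ipL2 (N : nat) (T : R) (f g : 'I_N -> R -> R) : R :=
  Rintegral mu `[0, T] (fun t => \sum_(i < N) f i t * g i t).

Definition kop (N : nat) (T : R) (G : 'I_N -> 'I_N -> R -> R -> R)
  (f : 'I_N -> R -> R) : 'I_N -> R -> R :=
  fun i t => Rintegral mu `[0, T] (fun s => \sum_(j < N) G i j t s * f j s).

Definition kadj (N : nat) (T : R) (G : 'I_N -> 'I_N -> R -> R -> R)
  (f : 'I_N -> R -> R) : 'I_N -> R -> R :=
  fun i t => Rintegral mu `[0, T] (fun s => \sum_(j < N) G j i s t * f j s).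

Definition ktrunc (N : nat) (t : R) (G : 'I_N -> 'I_N -> R -> R -> R)
  : 'I_N -> 'I_N -> R -> R -> R :=
  fun i j s r => if t < r then G i j s r else 0.
End Defs.

(* Put g := 1_{(t,T]} f.  Since B and Bb are Volterra kernels, B_t f = B g
   vanishes on [0,t] while (Bb_t)^* f = 1_{(t,T]} Bb^* f = 1_{(t,T]} Bb^* g, so
     <f, (B_t + (Bb_t)^* ) f> = <g, (B + Bb^* ) g> >= <g, (c0 - 2 Lambda) g>
   by Assumption (C) applied to g.  Adding <f, 2 Lambda f> leaves c0 |f|^2 on
   (t,T] and 2 Lambda |f|^2 on [0,t], hence at least min(c0, 2 min_i lam_i) |f|^2.
   Fubini-Tonelli is needed only to see that f . (G h) is integrable for square
   integrable f, h and square integrable kernels G, which makes <., .> additive. *)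

From HB Require Import structures.
From mathcomp Require Import all_boot all_order all_algebra.
From mathcomp Require Import all_classical all_reals all_analysis.
From mathcomp Require Import measurable_realfun ring lra.
Import Order.TTheory GRing.Theory Num.Theory.
Import numFieldNormedType.Exports.
Set Implicit Arguments. Unset Strict Implicit. Unset Printing Implicit Defensive.
Local Open Scope classical_set_scope.
Local Open Scope ring_scope.

Lemma norm_mul_le_sqrD (R : realDomainType) (a b c : R) :
  `|a * (b * c)| <= b ^+ 2 + a ^+ 2 * c ^+ 2.
Proof.
rewrite !normrM -[b ^+ 2]real_normK ?num_real // -[a ^+ 2]real_normK ?num_real //
  -[c ^+ 2]real_normK ?num_real //.
have := normr_ge0 a; have := normr_ge0 b; have := normr_ge0 c.
set x := `|a|; set y := `|b|; set z := `|c| => z0 y0 x0.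
have xz0 : 0 <= x * z by exact: mulr_ge0.
nra.
Qed.

Section fubini_bounds.
Local Open Scope ereal_scope.
Context d1 d2 (T1 : measurableType d1) (T2 : measurableType d2) (R : realType).
Variables (m1 : {sigma_finite_measure set T1 -> \bar R})
          (m2 : {sigma_finite_measure set T2 -> \bar R}).

Lemma measurable_partial_integral (Phi : T1 * T2 -> R) :
  measurable_fun setT Phi ->
  measurable_fun setT (fun x => \int[m2]_y (Phi (x, y))%:E : \bar R).
Proof.
move=> mPhi; have mE : measurable_fun setT (EFin \o Phi) by exact/measurable_EFinP.
rewrite (_ : (fun x => _) = (fun x => \int[m2]_y (EFin \o Phi)^\+ (x, y))
    \- (fun x => \int[m2]_y (EFin \o Phi)^\- (x, y))).
  apply: emeasurable_funB.
  - exact: measurable_fun_fubini_tonelli_F (measurable_funepos mE) (funepos_ge0 _).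
  - exact: measurable_fun_fubini_tonelli_F (measurable_funeneg mE) (funeneg_ge0 _).
by apply/funext => x; rewrite [LHS]integralE !unlock.
Qed.

Lemma abse_fine_le (x : \bar R) : `|fine x|%:E <= `|x|.
Proof. by case: x => [r| |]; rewrite /= ?lexx ?leey. Qed.

Lemma integrable_mul_partial_integral (u : T1 -> R) (Phi : T1 * T2 -> R) :
  measurable_fun setT u -> measurable_fun setT Phi ->
  (m1 \x m2).-integrable setT (fun p => (u p.1 * Phi p)%:E) ->
  m1.-integrable setT (fun x => (u x * fine (\int[m2]_y (Phi (x, y))%:E))%:E).
Proof.
move=> mu_ mPhi iuPhi.
have mI := measurable_partial_integral mPhi.
apply/integrableP; split.
  by apply/measurable_EFinP; apply: measurable_funM => //; exact: measurableT_comp.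
have muPhi : measurable_fun setT (fun p => (u p.1 * Phi p)%:E).
  by apply/measurable_EFinP; apply: measurable_funM => //; exact: measurableT_comp.
apply: le_lt_trans ((integrable12ltyP m1 m2 muPhi).1 iuPhi).
apply: ge0_le_integral => //.
- apply: measurableT_comp => //; apply/measurable_EFinP.
  by apply: measurable_funM => //; exact: measurableT_comp.
- have mabs : measurable_fun setT (abse \o fun p => (u p.1 * Phi p)%:E).
    exact: measurableT_comp.
  exact: (measurable_fun_fubini_tonelli_F _ mabs (fun _ => abse_ge0 _)).
move=> x _.
have mPhix : measurable_fun setT (fun y => `|(Phi (x, y))%:E|).
  by apply: measurableT_comp => //; apply/measurable_EFinP; exact: measurable_fun_pair2.
apply: (@le_trans _ _ (`|(u x)%:E| * \int[m2]_y `|(Phi (x, y))%:E|)).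
  rewrite EFinM abseM; apply: lee_wpmul2l => //.
  apply: le_trans (abse_fine_le _) (le_abse_integral _ _ _) => //.
  by apply/measurable_EFinP; exact: measurable_fun_pair2.
rewrite -ge0_integralZl // le_eqVlt; apply/orP; left; apply/eqP/eq_integral => y _.
by rewrite EFinM abseM.
Qed.

Lemma integrable_sqr_tensor (a : T1 -> R) (b : T2 -> R) :
  measurable_fun setT a -> measurable_fun setT b ->
  m1.-integrable setT (fun x => (a x ^+ 2)%:E) ->
  m2.-integrable setT (fun y => (b y ^+ 2)%:E) ->
  (m1 \x m2).-integrable setT (fun p => (a p.1 ^+ 2 * b p.2 ^+ 2)%:E).
Proof.
move=> ma mb ia ib.
have mab : measurable_fun setT (fun p : T1 * T2 => (a p.1 ^+ 2 * b p.2 ^+ 2)%:E).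
  apply/measurable_EFinP; apply: measurable_funM; apply: measurable_funX;
  exact: measurableT_comp.
apply/(integrable12ltyP m1 m2 mab).
have sqr_ge0E (r : R) : 0 <= (r ^+ 2)%:E by rewrite lee_fin sqr_ge0.
have ma2 : measurable_fun setT (fun x => (a x ^+ 2)%:E).
  by apply/measurable_EFinP; exact: measurable_funX.
have mb2 : measurable_fun setT (fun y => (b y ^+ 2)%:E).
  by apply/measurable_EFinP; exact: measurable_funX.
rewrite (eq_integral (fun x => (a x ^+ 2)%:E * \int[m2]_y (b y ^+ 2)%:E)).
  rewrite (ge0_integralZr _ _ ma2) ?integral_ge0 //.
  by rewrite lte_mul_pinfty ?integral_ge0 ?integrable_fin_num ?integrable_lty.
move=> x _; rewrite -ge0_integralZl //; apply: eq_integral => y _.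
by rewrite /= ger0_norm ?EFinM // mulr_ge0 // sqr_ge0.
Qed.

Lemma integrable_comp_swap (h : T1 * T2 -> R) : measurable_fun setT h ->
  (m1 \x m2).-integrable setT (fun p => (h p)%:E) ->
  (m2 \x m1).-integrable setT (fun p => (h (p.2, p.1))%:E).
Proof.
move=> mh ih.
have mhE : measurable_fun setT (fun p => (h p)%:E) by exact/measurable_EFinP.
apply/(integrable12ltyP m2 m1).
  exact: (measurableT_comp mhE (measurable_swap (T1 := T2) (T2 := T1))).
exact: (integrable21ltyP m1 m2 mhE).1 ih.
Qed.

Lemma integrable_mul_sum_tensor (n : nat) (u : T1 -> R) (K : 'I_n -> T1 * T2 -> R)
    (v : 'I_n -> T2 -> R) :
  measurable_fun setT u -> (forall j, measurable_fun setT (K j)) ->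
  (forall j, measurable_fun setT (v j)) ->
  m1.-integrable setT (fun x => (u x ^+ 2)%:E) ->
  (forall j, (m1 \x m2).-integrable setT (fun p => (K j p ^+ 2)%:E)) ->
  (forall j, m2.-integrable setT (fun y => (v j y ^+ 2)%:E)) ->
  (m1 \x m2).-integrable setT (fun p => (u p.1 * \sum_(j < n) K j p * v j p.2)%:E).
Proof.
move=> mu_ mK mv iu iK iv.
have mu1 : measurable_fun setT (fun p : T1 * T2 => u p.1) by exact: measurableT_comp.
have mv2 j : measurable_fun setT (fun p : T1 * T2 => v j p.2) by exact: measurableT_comp.
have iM : (m1 \x m2).-integrable setT
    (fun p => \sum_(j < n) ((K j p ^+ 2)%:E + (u p.1 ^+ 2 * v j p.2 ^+ 2)%:E)).
  apply: integrable_sum => // j _; apply: integrableD => //.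
  exact: integrable_sqr_tensor.
apply: le_integrable iM => //.
- apply/measurable_EFinP; apply: measurable_funM => //.
  by apply: measurable_sum => j; exact: measurable_funM.
move=> p _; rewrite -(eq_bigr _ (fun j _ => EFinD _ _)) sumEFin /= lee_fin.
rewrite [X in (_ <= X)%R]ger0_norm; last first.
  by apply: sumr_ge0 => j _; rewrite addr_ge0 ?sqr_ge0 // mulr_ge0 ?sqr_ge0.
rewrite mulr_sumr; apply: le_trans (ler_norm_sum _ _ _) _.
by apply: ler_sum => j _; exact: norm_mul_le_sqrD.
Qed.

End fubini_bounds.

Section square_integrable_restrict.
Context d (X : measurableType d) (R : realType) (mu : {measure set X -> \bar R}).

Lemma sqr_integrable_restrictP (D : set X) (f : X -> R) : measurable D ->
  measurable_fun D f /\ mu.-integrable D (fun x => (f x ^+ 2)%:E) <->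
  measurable_fun setT (f \_ D) /\
  mu.-integrable setT (fun x => ((f \_ D) x ^+ 2)%:E).
Proof.
move=> mD; rewrite (measurable_restrictT _ mD) (integrable_mkcond _ mD).
suff -> : (fun x => (f x ^+ 2)%:E) \_ D = (fun x => ((f \_ D) x ^+ 2)%:E) by [].
by apply/funext => x; rewrite !patchE; case: ifP; rewrite ?expr0n.
Qed.

End square_integrable_restrict.

Section kernel_operators.
Context {R : realType}.
Notation mu := (@lebesgue_measure R).
Variables (N : nat) (T : R).

Let measurable_square : measurable (`[0, T] `*` `[0, T] : set (R * R)).
Proof. exact: measurableX. Qed.

Lemma L2kernel_swap (G : R -> R -> R) :
  L2kernel T G -> L2kernel T (fun s r => G r s).
Proof.
move=> LG; pose K := (fun p : R * R => G p.1 p.2) \_ (`[0, T] `*` `[0, T]).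
have [mK iK] := (sqr_integrable_restrictP (mu \x mu)%E _ measurable_square).1 LG.
apply/(sqr_integrable_restrictP (mu \x mu)%E _ measurable_square).
have -> : (fun p : R * R => G p.2 p.1) \_ (`[0, T] `*` `[0, T]) =
    K \o (fun p => (p.2, p.1)).
  by apply/funext => p; rewrite /K /= !patchE !in_setX andbC.
split; first exact: (measurableT_comp mK (measurable_swap (T1 := R) (T2 := R))).
exact: (integrable_comp_swap (m1 := mu) (m2 := mu) (h := fun p => K p ^+ 2)
  (measurable_funX _ mK) iK).
Qed.

Lemma integrable_mul_kernel (G : 'I_N -> R -> R -> R) (h : 'I_N -> R -> R)
    (u : R -> R) :
  (forall j, L2kernel T (G j)) -> L2vec T h -> L2fun T u ->
  mu.-integrable `[0, T] (fun s =>
    (u s * \int[mu]_(r in `[0, T]) \sum_(j < N) G j s r * h j r)%:E).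
Proof.
move=> LG Lh Lu.
have [mu_ iu] := (sqr_integrable_restrictP mu u (measurable_itv `[0, T])).1 Lu.
have Lh' j := (sqr_integrable_restrictP mu (h j) (measurable_itv `[0, T])).1 (Lh j).
have LG' j := (sqr_integrable_restrictP (mu \x mu)%E _ measurable_square).1 (LG j).
pose K j := (fun p : R * R => G j p.1 p.2) \_ (`[0, T] `*` `[0, T]).
(* [p] must live in Lebesgue's measurable space, not in the default one on [R]. *)
pose Phi (p : measurableTypeR R * measurableTypeR R) :=
  \sum_(j < N) K j p * (h j \_ `[0, T]) p.2.
have mPhi : measurable_fun setT Phi.
  apply: measurable_sum => j; apply: measurable_funM; first exact: (LG' j).1.
  exact: measurableT_comp (Lh' j).1 measurable_snd.
have iPhi := integrable_mul_partial_integral mu_ mPhi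
  (integrable_mul_sum_tensor mu_ (fun j => (LG' j).1) (fun j => (Lh' j).1)
     iu (fun j => (LG' j).2) (fun j => (Lh' j).2)).
apply: (eq_integrable _ _ _ _ (integrableS measurableT _ (@subsetT _ _) iPhi));
  [exact: measurable_itv| move=> s Ds |exact: measurable_itv].
rewrite patchE Ds /Rintegral integral_mkcond; congr (EFin (_ * fine _)).
apply: eq_integral => r _; rewrite patchE; case: ifP => Dr.
  by congr EFin; apply: eq_bigr => j _; rewrite /K !patchE in_setX Ds Dr.
by rewrite /Phi big1 // => j _; rewrite patchE Dr mulr0.
Qed.

Lemma integrable_ipL2_kop (G : 'I_N -> 'I_N -> R -> R -> R) (f h : 'I_N -> R -> R) :
  (forall i j, L2kernel T (G i j)) -> L2vec T f -> L2vec T h ->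
  mu.-integrable `[0, T] (EFin \o (fun s => \sum_(i < N) f i s * kop T G h i s)).
Proof.
move=> LG Lf Lh.
have iS : mu.-integrable `[0, T] (fun s => \sum_(i < N) (f i s * kop T G h i s)%:E).
  by apply: integrable_sum => // i _; exact: integrable_mul_kernel.
by apply: (eq_integrable _ _ _ _ iS) => // s _; rewrite /= sumEFin.
Qed.

Lemma integrable_ipL2_kadj (G : 'I_N -> 'I_N -> R -> R -> R) (f h : 'I_N -> R -> R) :
  (forall i j, L2kernel T (G i j)) -> L2vec T f -> L2vec T h ->
  mu.-integrable `[0, T] (EFin \o (fun s => \sum_(i < N) f i s * kadj T G h i s)).
Proof.
by move=> LG; apply: (integrable_ipL2_kop (G := fun i j s r => G j i r s)) =>
  i j; exact: L2kernel_swap.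
Qed.

Lemma integrable_ipL2_kquad (B Bb : 'I_N -> 'I_N -> R -> R -> R)
    (f h : 'I_N -> R -> R) :
  (forall i j, L2kernel T (B i j)) -> (forall i j, L2kernel T (Bb i j)) ->
  L2vec T f -> L2vec T h ->
  mu.-integrable `[0, T] (EFin \o (fun s =>
    \sum_(i < N) f i s * (kop T B h i s + kadj T Bb h i s))).
Proof.
move=> LB LBb Lf Lh.
apply: (eq_integrable _ _ _ _ (integrableD _ (integrable_ipL2_kop LB Lf Lh)
  (integrable_ipL2_kadj LBb Lf Lh))) => // s _.
by rewrite /= -EFinD -big_split; congr EFin; apply: eq_bigr => i _; rewrite mulrDr.
Qed.

End kernel_operators.

Section truncation.
Context {R : realType}.
Variables (N : nat) (T : R).

Definition ftrunc (t : R) (f : 'I_N -> R -> R) : 'I_N -> R -> R :=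
  fun i r => if t < r then f i r else 0.

Lemma L2vec_ftrunc t f : L2vec T f -> L2vec T (ftrunc t f).
Proof.
move=> Lf i; have [mf if2] := Lf i.
have mg : measurable_fun `[0, T] (ftrunc t f i).
  apply: measurable_fun_if.
  - exact: measurable_itv.
  - by apply: measurable_fun_ltr; [exact: measurable_cst|exact: measurable_id].
  - by apply: measurable_funS mf; [exact: measurable_itv|exact: subIsetl].
  - exact: measurable_cst.
split => //; apply: le_integrable if2; first exact: measurable_itv.
  by apply/measurable_EFinP; exact: measurable_funX.
move=> r _ /=; rewrite /ftrunc lee_fin; case: ifP => // _.
by rewrite expr0n normr0.
Qed.

Lemma kop_ktrunc t (G : 'I_N -> 'I_N -> R -> R -> R) f :
  kop T (ktrunc t G) f = kop T G (ftrunc t f).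
Proof.
apply/funext => i; apply/funext => s; apply: eq_Rintegral => r _.
by apply: eq_bigr => j _; rewrite /ktrunc /ftrunc; case: ifP; rewrite ?mul0r ?mulr0.
Qed.

Lemma kadj_ktrunc t (G : 'I_N -> 'I_N -> R -> R -> R) f i s :
  kadj T (ktrunc t G) f i s = if t < s then kadj T G f i s else 0.
Proof.
rewrite /kadj /ktrunc; case: ifP => // _.
by rewrite /Rintegral integral0_eq // => r _; rewrite big1 // => j _; rewrite mul0r.
Qed.

Section volterra_kernels.
Variable G : 'I_N -> 'I_N -> R -> R -> R.
Hypothesis volG : forall i j, volterra T (G i j).

Lemma kop_ftrunc_le t f i s : 0 <= s <= T -> s <= t ->
  kop T G (ftrunc t f) i s = 0.
Proof.
move=> sD st; rewrite /kop /Rintegral integral0_eq // => r.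
rewrite /= in_itv /= => rD.
rewrite big1 // => j _; rewrite /ftrunc; case: ltP => tr; last by rewrite mulr0.
by rewrite volG ?mul0r // (le_trans st) ?ltW.
Qed.

Lemma kadj_ftrunc_gt t f i s : 0 <= s <= T -> t < s ->
  kadj T G f i s = kadj T G (ftrunc t f) i s.
Proof.
move=> sD ts; apply: eq_Rintegral => r; rewrite mem_setE in_itv /= => rD.
apply: eq_bigr => j _; rewrite /ftrunc; case: ltP => // rt.
by rewrite volG ?mul0r // ltW // (le_lt_trans rt).
Qed.

End volterra_kernels.

Lemma ipL2_integrand_ktrunc (B Bb : 'I_N -> 'I_N -> R -> R -> R) t f :
  (forall i j, volterra T (B i j)) -> (forall i j, volterra T (Bb i j)) ->
  {in `[0, T]%classic, forall s,
    \sum_(i < N) f i s * (kop T (ktrunc t B) f i s + kadj T (ktrunc t Bb) f i s) =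
    \sum_(i < N) ftrunc t f i s *
      (kop T B (ftrunc t f) i s + kadj T Bb (ftrunc t f) i s)}.
Proof.
move=> volB volBb s; rewrite mem_setE in_itv /= => sD.
apply: eq_bigr => i _.
rewrite kop_ktrunc kadj_ktrunc [ftrunc t f i s]/ftrunc.
case: ltP => ts; first by rewrite (kadj_ftrunc_gt volBb f i sD ts).
by rewrite (kop_ftrunc_le volB f i sD ts) mul0r addr0 mulr0.
Qed.

End truncation.

Section energy.
Context {R : realType}.
Notation mu := (@lebesgue_measure R).
Variables (N : nat) (T : R).

Lemma ipL2D (f h1 h2 : 'I_N -> R -> R) :
  mu.-integrable `[0, T] (EFin \o (fun s => \sum_(i < N) f i s * h1 i s)) ->
  mu.-integrable `[0, T] (EFin \o (fun s => \sum_(i < N) f i s * h2 i s)) ->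
  ipL2 T f (fun i s => h1 i s + h2 i s) = ipL2 T f h1 + ipL2 T f h2.
Proof.
move=> ih1 ih2; rewrite /ipL2 -(RintegralD _ ih1 ih2); last exact: measurable_itv.
by apply: eq_Rintegral => s _; rewrite -big_split; apply: eq_bigr => i _; rewrite mulrDr.
Qed.

Lemma integrable_ipL2_scale (k : 'I_N -> R) (f : 'I_N -> R -> R) : L2vec T f ->
  mu.-integrable `[0, T] (EFin \o (fun s => \sum_(i < N) f i s * (k i * f i s))).
Proof.
move=> Lf.
have iS : mu.-integrable `[0, T] (fun s => \sum_(i < N) ((k i)%:E * (f i s ^+ 2)%:E)%E).
  apply: integrable_sum => [|i _]; first exact: measurable_itv.
  by apply: integrableZl; [exact: measurable_itv|exact: (Lf i).2].
apply: (eq_integrable _ _ _ _ iS) => [|s _]; first exact: measurable_itv.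
rewrite /= -sumEFin; apply: eq_bigr => i _; rewrite -EFinM; congr EFin; ring.
Qed.

Lemma ipL2_kquadD (B Bb : 'I_N -> 'I_N -> R -> R -> R) (k : 'I_N -> R) h :
  (forall i j, L2kernel T (B i j)) -> (forall i j, L2kernel T (Bb i j)) ->
  L2vec T h ->
  ipL2 T h (fun i s => kop T B h i s + kadj T Bb h i s + k i * h i s) =
  ipL2 T h (fun i s => kop T B h i s + kadj T Bb h i s) +
  ipL2 T h (fun i s => k i * h i s).
Proof.
by move=> LB LBb Lh; rewrite ipL2D ?integrable_ipL2_scale ?integrable_ipL2_kquad.
Qed.

Lemma ipL2D_ktrunc (B Bb : 'I_N -> 'I_N -> R -> R -> R) (h : 'I_N -> R -> R) t f :
  (forall i j, volterra T (B i j) /\ L2kernel T (B i j)) ->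
  (forall i j, volterra T (Bb i j) /\ L2kernel T (Bb i j)) ->
  L2vec T f ->
  mu.-integrable `[0, T] (EFin \o (fun s => \sum_(i < N) f i s * h i s)) ->
  ipL2 T f (fun i s => h i s + kop T (ktrunc t B) f i s + kadj T (ktrunc t Bb) f i s) =
  ipL2 T f h + ipL2 T (ftrunc t f)
    (fun i s => kop T B (ftrunc t f) i s + kadj T Bb (ftrunc t f) i s).
Proof.
move=> hB hBb Lf ih.
have eqK := ipL2_integrand_ktrunc t f (fun i j => (hB i j).1) (fun i j => (hBb i j).1).
have iK := integrable_ipL2_kquad (fun i j => (hB i j).2) (fun i j => (hBb i j).2)
  (L2vec_ftrunc t Lf) (L2vec_ftrunc t Lf).
rewrite (_ : (fun i s => _ + _ + _) = (fun i s => h i s +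
    (kop T (ktrunc t B) f i s + kadj T (ktrunc t Bb) f i s))); last first.
  by apply/funext => i; apply/funext => s; rewrite addrA.
rewrite ipL2D //; last first.
  apply: (eq_integrable _ _ _ _ iK) => [|s sD]; first exact: measurable_itv.
  by rewrite /= eqK.
by congr (_ + _); exact: eq_Rintegral.
Qed.

Lemma ipL2_ftrunc_le (lam : 'I_N -> R) (c c0 t : R) f :
  c <= c0 -> (forall i, c <= 2 * lam i) -> L2vec T f ->
  c * ipL2 T f f <= ipL2 T f (fun i s => 2 * lam i * f i s) -
    ipL2 T (ftrunc t f) (fun i s => (2 * lam i - c0) * ftrunc t f i s).
Proof.
move=> cc0 clam Lf.
have mD : measurable `[0, T] by exact: measurable_itv.
have i1 := integrable_ipL2_scale (fun=> 1) Lf.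
have i2 := integrable_ipL2_scale (fun i => 2 * lam i) Lf.
have i3 := integrable_ipL2_scale (fun i => 2 * lam i - c0) (L2vec_ftrunc t Lf).
have -> : ipL2 T f f = ipL2 T f (fun i s => 1 * f i s).
  by congr ipL2; apply/funext => i; apply/funext => s; rewrite mul1r.
rewrite /ipL2 -RintegralZl // -RintegralB //.
apply: le_Rintegral => //.
- exact: (integrableZl _ _ i1).
- exact: (integrableB _ i2 i3).
move=> s _; rewrite mulr_sumr -sumrB; apply: ler_sum => i _.
have := clam i; have := sqr_ge0 (f i s); rewrite /ftrunc; case: ifP => _; nra.
Qed.

End energy.

Lemma exists_pos_lower_bound (R : realFieldType) (N : nat) (lam : 'I_N -> R) :
  (forall i, 0 < lam i) -> exists m : R, 0 < m /\ forall i, m <= lam i.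
Proof.
move=> lam_gt0.
have S0 : 0 <= \sum_(i < N) (lam i)^-1.
  by apply: sumr_ge0 => i _; rewrite invr_ge0 ltW.
exists (1 + \sum_(i < N) (lam i)^-1)^-1; split; first by rewrite invr_gt0 ltr_wpDr.
move=> i; rewrite -[lam i]invrK lef_pV2 ?posrE ?invr_gt0 ?ltr_wpDr //.
rewrite (bigD1 i) //= addrCA lerDl addr_ge0 //.
by apply: sumr_ge0 => j _; rewrite invr_ge0 ltW.
Qed.

Theorem mainTheorem13 (R : realType) (N : nat) (T : R)
  (lam : 'I_N -> R) (B Bb : 'I_N -> 'I_N -> R -> R -> R) :
  (* Assumption (A) *)
  (forall i, 0 < lam i) ->
  (forall i j, volterra T (B i j) /\ L2kernel T (B i j)) ->
  (forall i j, volterra T (Bb i j) /\ L2kernel T (Bb i j)) ->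
  (forall i, Bb i i = B i i) ->
  (* Assumption (C) *)
  (exists c0 : R, 0 < c0 /\
     forall f : 'I_N -> R -> R, L2vec T f ->
       0 <= ipL2 T f (fun i s => kop T B f i s + kadj T Bb f i s
                                 + 2 * lam i * f i s - c0 * f i s)) ->
  exists c0 : R, 0 < c0 /\
    forall t : R, 0 <= t <= T ->
    forall f : 'I_N -> R -> R, L2vec T f ->
      c0 * ipL2 T f f <=
      ipL2 T f (fun i s => 2 * lam i * f i s + kop T (ktrunc t B) f i s
                           + kadj T (ktrunc t Bb) f i s).
Proof.
move=> lam_gt0 hB hBb _ [c0 [c0_gt0 hC]].
have LB i j := (hB i j).2; have LBb i j := (hBb i j).2.
have [m [m_gt0 m_le]] := exists_pos_lower_bound lam_gt0.
pose c := Num.min c0 (2 * m).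
have c_le_c0 : c <= c0 by rewrite ge_min lexx.
have c_le_lam i : c <= 2 * lam i by rewrite ge_min ler_pM2l ?m_le ?orbT.
exists c; split => [|t _ f Lf]; first by rewrite lt_min c0_gt0 mulr_gt0.
have Lg := L2vec_ftrunc t Lf.
have := hC _ Lg.
rewrite (_ : (fun i s => _ - _) = (fun i s => kop T B (ftrunc t f) i s +
    kadj T Bb (ftrunc t f) i s + (2 * lam i - c0) * ftrunc t f i s)); last first.
  by apply/funext => i; apply/funext => s; ring.
rewrite (ipL2_kquadD _ LB LBb Lg) ipL2D_ktrunc //; last exact: integrable_ipL2_scale.
have := ipL2_ftrunc_le t c_le_c0 c_le_lam Lf; lra.
Qed.
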